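(* For every $m\ge3$, the $m$-candidate anti-plurality rule (score vector $(1,\dots,1,0)$) is not dominated by any other $m$-candidate positional rule.
   Context: For an $m$-candidate positional rule with score vector $w=(w_1,\dots,w_m)$, $1=w_1\ge\cdots\ge w_m=0$, let $\bar w=\frac1m\sum_iw_i$, $\sigma_w^2=\frac1m\sum_iw_i^2-\bar w^2$, $M_w=\{(\lambda,\mu):0\le\lambda\le\mu,\ w_{i+1}\lambda+(1-w_i)\mu\le1,\ i=1,\dots,m-1\}$, and $V_w=\sup\{\lambda(\rho_1(Z)-\bar Z)+\mu(\bar Z-\rho_2(Z)):(\lambda,\mu)\in\sigma_w(\frac{m}{m-1})^{1/2}M_w\}\in[0,\infty]$, where $Z=(Z_1,\dots,Z_m)$ has independent standard normal entries, $\bar Z$ is their mean and $\rho_j(Z)$ the $j$-th largest entry. (Under Impartial Culture, $V_w$ is the limiting distribution of the minimum manipulating coalition size divided by $\sqrt n$.) Let $g_w(v)=\mathbb P(V_w\le v)$. A rule $w$ dominates a rule $w'$ if $g_w(v)\le g_{w'}(v)$ for all $v\ge0$. *)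

From HB Require Import structures.
From mathcomp Require Import all_boot all_order all_algebra.
From mathcomp Require Import all_classical all_reals all_analysis.
Set Implicit Arguments. Unset Strict Implicit. Unset Printing Implicit Defensive.
Import Order.TTheory GRing.Theory Num.Theory.
Import numFieldNormedType.Exports.
Local Open Scope classical_set_scope.
Local Open Scope ring_scope.

(* Candidates / positions are indexed 0-based by 'I_m: w i is the paper's w_{i+1}. *)

Definition positional_rule (R : realType) (m : nat) (w : 'I_m -> R) : Prop :=
  (forall i : 'I_m, val i = 0%N -> w i = 1) /\
  (forall i : 'I_m, val i = m.-1 -> w i = 0) /\
  (forall i j : 'I_m, (val i <= val j)%N -> w j <= w i).

Definition antiplurality (R : realType) (m : nat) : 'I_m -> R :=
  fun i => if val i == m.-1 then 0 else 1.

Definition mean_w (R : realType) (m : nat) (w : 'I_m -> R) : R :=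
  (\sum_(i < m) w i) / m%:R.

Definition sigma_w (R : realType) (m : nat) (w : 'I_m -> R) : R :=
  Num.sqrt ((\sum_(i < m) w i ^+ 2) / m%:R - mean_w w ^+ 2).

Definition M_w (R : realType) (m : nat) (w : 'I_m -> R) : set (R * R) :=
  [set p | 0 <= p.1 /\ p.1 <= p.2 /\
     forall i j : 'I_m, val j = (val i).+1 ->
       w j * p.1 + (1 - w i) * p.2 <= 1].

Definition zbar (R : realType) (m : nat) (z : 'I_m -> R) : R :=
  (\sum_(i < m) z i) / m%:R.

(** rho j z = the j-th largest entry of z (j >= 1), counted with multiplicity. *)
Definition rho (R : realType) (m : nat) (j : nat) (z : 'I_m -> R) : R :=
  nth 0 (sort (fun x y : R => y <= x) [seq z i | i <- enum 'I_m]) j.-1.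

(** V_w as a function of the realisation z of Z, valued in [0, +oo]. *)
Definition V_w (R : realType) (m : nat) (w : 'I_m -> R) (z : 'I_m -> R) : \bar R :=
  let c := sigma_w w * Num.sqrt (m%:R / (m%:R - 1)) in
  ereal_sup [set x : \bar R | exists l u : R,
     (exists2 p, M_w w p & (l, u) = (c * p.1, c * p.2)) /\
     x = (l * (rho 1 z - zbar z) + u * (zbar z - rho 2 z))%:E].

Definition iid_std_normal (R : realType) d (T : measurableType d)
    (P : probability T R) (m : nat) (Z : 'I_m -> {RV P >-> R}) : Prop :=
  (forall (i : 'I_m) (A : set R), measurable A ->
     P (Z i @^-1` A) = normal_prob 0 1 A) /\
  (forall B : 'I_m -> set R, (forall i, measurable (B i)) ->
     P (\bigcap_(i in [set: 'I_m]) (Z i @^-1` B i)) =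
       (\prod_(i < m) P (Z i @^-1` B i))%E).

Definition g_w (R : realType) d (T : measurableType d) (P : probability T R)
    (m : nat) (Z : 'I_m -> {RV P >-> R}) (w : 'I_m -> R) (v : R) : \bar R :=
  P [set t | V_w w (fun i => Z i t) <= v%:E]%E.

Definition dominates (R : realType) d (T : measurableType d) (P : probability T R)
    (m : nat) (Z : 'I_m -> {RV P >-> R}) (w w' : 'I_m -> R) : Prop :=
  forall v : R, 0 <= v -> (g_w Z w v <= g_w Z w' v)%E.

(* For anti-plurality each constraint of M_w either reads lambda <= 1 or is
   vacuous, so (0, mu) lies in M_w for every mu >= 0 and V_w is infinite as soon
   as Zbar > rho_2(Z).  This happens on an event of positive probability (one
   Z_i very large, the others in [-1, 1]), so g_AP stays below some c < 1.
   For any other positional rule some w_i with i < m is < 1; the i-th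
   constraint then bounds mu, hence M_w is bounded, V_w is finite everywhere
   and g_w(v) tends to 1, so that g_w(n) > g_AP(n) for some n. *)

From HB Require Import structures.
From mathcomp Require Import all_boot all_order all_algebra.
From mathcomp Require Import all_classical all_reals all_analysis.
From mathcomp Require Import zify ring lra.
Import Order.TTheory GRing.Theory Num.Theory.
Local Open Scope classical_set_scope.
Local Open Scope ring_scope.

Section order_statistics.
Context {R : realType} {m : nat}.
Implicit Types z : 'I_m -> R.

Let ge_trans : transitive (fun x y : R => y <= x).
Proof. by move=> y x t hxy hyz; exact: le_trans hyz hxy. Qed.

Let count_enum (P : pred 'I_m) : count P (enum 'I_m) = #|P|.
Proof. by rewrite cardE enumT -size_filter /enum_mem. Qed.

Let sorted_entries z : exists2 s, perm_eq s [seq z i | i <- enum 'I_m] &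
  sorted (fun x y : R => y <= x) s /\ forall j, rho j z = nth 0 s j.-1.
Proof.
exists (sort (fun x y : R => y <= x) [seq z i | i <- enum 'I_m]).
  by rewrite perm_sort.
by split=> //; apply: sort_sorted => x y; exact: le_total.
Qed.

Lemma rho1_ge z i : z i <= rho 1 z.
Proof.
have [[|x s] ps [ss ->]] := sorted_entries z.
  by move/perm_mem/(_ (z i)): ps; rewrite map_f ?mem_enum.
have : z i \in x :: s by rewrite (perm_mem ps) map_f ?mem_enum.
rewrite inE => /predU1P[-> //|zs].
by move/allP: (order_path_min ge_trans ss); apply.
Qed.

Lemma rho1_mem z : (0 < m)%N -> exists i, rho 1 z = z i.
Proof.
move=> m0; have [[|x s] ps [_ ->]] := sorted_entries z.
  by move/perm_size: ps; rewrite size_map size_enum_ord => m00; rewrite -m00 in m0.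
have : x \in [seq z i | i <- enum 'I_m] by rewrite -(perm_mem ps) mem_head.
by case/mapP => i _ ->; exists i.
Qed.

Lemma rho2_ge_min z i j : i != j -> Num.min (z i) (z j) <= rho 2 z.
Proof.
move=> ij; have [s ps [ss ->]] := sorted_entries z; rewrite leNgt /=.
apply/negP => s1_lt.
have : (1 < count (fun y => nth 0 s 1 < y)%R s)%N.
  rewrite (permP ps) count_map count_enum; apply/card_gt1P; exists i, j.
  by rewrite !inE /= !(lt_le_trans s1_lt) ?ge_min ?lexx ?orbT.
case: s ss {ps s1_lt} => [|x [|y s]] //=; first by case: (_ < _).
case/andP=> _ /(order_path_min ge_trans)/allP ys.
rewrite ltxx (@eq_in_count _ _ pred0) ?count_pred0 => [|t /ys /=].
  by case: (_ < _).
by rewrite ltNge => ->.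
Qed.

Lemma rho2_le_min z : (1 < m)%N ->
  exists i j, i != j /\ rho 2 z <= Num.min (z i) (z j).
Proof.
move=> m1; have [s ps [ss ->]] := sorted_entries z.
have : (1 < count (fun y => nth 0 s 1 <= y)%R s)%N.
  move/perm_size: (ps); rewrite size_map size_enum_ord => sz.
  case: s ss {ps} sz m1 => [|x [|y s]] /= => [_ <- //|_ <- //|/andP[yx _] _ _].
  by rewrite yx lexx.
rewrite (permP ps) count_map count_enum => /card_gt1P[i [j [zi zj ij]]].
by exists i, j; split; rewrite // le_min; move: zi zj; rewrite !inE => -> ->.
Qed.

Lemma rho1_bigmax z i0 : rho 1 z = \big[Num.max/z i0]_i z i.
Proof.
apply/le_anti/andP; split; last by apply: bigmax_le => // *; exact: rho1_ge.
have [i ->] := rho1_mem z (leq_ltn_trans (leq0n _) (ltn_ord i0)).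
exact: le_bigmax.
Qed.

Lemma rho2_bigmax z i0 i1 : i0 != i1 -> rho 2 z =
  \big[Num.max/Num.min (z i0) (z i1)]_(p : 'I_m * 'I_m | p.1 != p.2)
    Num.min (z p.1) (z p.2).
Proof.
move=> i01; apply/le_anti/andP; split; last first.
  by apply: bigmax_le => [|[i j] /= ij]; exact: rho2_ge_min.
have m1 : (1 < m)%N by rewrite -[m]card_ord; apply/card_gt1P; exists i0, i1.
have [i [j [ij /le_trans]]] := rho2_le_min z m1; apply.
exact: (@le_bigmax_cond _ _ _ _ (i, j) (fun p : 'I_m * 'I_m => p.1 != p.2)
  (fun p => Num.min (z p.1) (z p.2))).
Qed.

End order_statistics.

Lemma measurable_bigmaxr d (T : measurableType d) (R : realType) (D : set T)
    (I : Type) (r : seq I) (P : pred I) (F : I -> T -> R) (f0 : T -> R) :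
  measurable_fun D f0 -> (forall i, measurable_fun D (F i)) ->
  measurable_fun D (fun t => \big[Num.max/f0 t]_(i <- r | P i) F i t).
Proof.
move=> mf0 mF; elim: r => [|i r ih]; first by under eq_fun do rewrite big_nil.
under eq_fun do rewrite big_cons.
by case: (P i) => //; exact: measurable_realfun.measurable_maxr.
Qed.

Section measurable_order_statistics.
Context {d : measure_display} {T : measurableType d} {R : realType} {m : nat}.
Context {Z : 'I_m -> T -> R}.
Hypothesis mZ : forall i, measurable_fun setT (Z i).

Lemma measurable_zbar : measurable_fun setT (fun t => zbar (Z ^~ t)).
Proof.
apply: (measurableT_comp (f := fun x : R => x / m%:R)).
  exact: measurable_realfun.mulrr_measurable.
exact: measurable_fun_approximation.measurable_sum.
Qed.

Lemma measurable_rho1 : (0 < m)%N -> measurable_fun setT (fun t => rho 1 (Z ^~ t)).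
Proof.
move=> m0; under eq_fun do rewrite (rho1_bigmax _ (Ordinal m0)).
exact: measurable_bigmaxr.
Qed.

Lemma measurable_rho2 : (1 < m)%N -> measurable_fun setT (fun t => rho 2 (Z ^~ t)).
Proof.
move=> m1; under eq_fun do rewrite (rho2_bigmax _ (Ordinal (ltnW m1)) (Ordinal m1)) //.
by apply: measurable_bigmaxr => *; exact: measurable_realfun.measurable_minr.
Qed.

End measurable_order_statistics.

Lemma ler_mulr_norm (R : realDomainType) (x a b : R) : 0 <= a <= b -> x * a <= `|x| * b.
Proof.
case/andP=> a0 ab; apply: le_trans (ler_wpM2l (normr_ge0 x) ab).
by rewrite ler_wpM2r // ler_norm.
Qed.

Lemma ler_addr_divSn (R : realType) (x y K : R) :
  (forall n : nat, x <= y + K / n.+1%:R) -> x <= y.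
Proof.
move=> h; rewrite leNgt; apply/negP => yx.
have K0 : 0 < K by have := h 0%N; rewrite divr1; lra.
have [n] : exists n : nat, 0 + n.+1%:R^-1 < (x - y) / K.
  by apply: ltr_add_invr; rewrite divr_gt0 // subr_gt0.
rewrite add0r ltr_pdivlMr // mulrC ltrBrDl => /lt_le_trans/(_ (h n)).
by rewrite addrC ltxx.
Qed.

Definition floor_grid {R : archiRealFieldType} (n : nat) (x : R) : R :=
  (Num.truncn (x * n.+1%:R))%:R / n.+1%:R.

Section floor_grid.
Context {R : archiRealFieldType} (n : nat).
Implicit Types x y : R.

Lemma floor_grid_ge0 x : 0 <= floor_grid n x.
Proof. by rewrite divr_ge0. Qed.

Lemma floor_grid_le x : 0 <= x -> floor_grid n x <= x.
Proof.
move=> x0; rewrite ler_pdivrMr //.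
by case/andP: (truncn_itv (mulr_ge0 x0 (ler0n _ n.+1))).
Qed.

Lemma floor_grid_gap x : x - floor_grid n x < n.+1%:R^-1.
Proof.
have := truncnS_gt (x * n.+1%:R); rewrite -ltr_pdivlMr // -natr1 mulrDl mul1r.
by rewrite ltrBlDl addrC.
Qed.

Lemma floor_grid_homo : {homo @floor_grid R n : x y / x <= y}.
Proof. by move=> x y xy; rewrite ler_pM2r // ler_nat le_truncn // ler_pM2r. Qed.

End floor_grid.

Section V_w.
Context {R : realType} {m : nat}.
Variable w : 'I_m -> R.
Implicit Types (z : 'I_m -> R) (p q : R * R).

Definition V_scale : R := sigma_w w * Num.sqrt (m%:R / (m%:R - 1)).

Definition V_form z p : R :=
  V_scale * (rho 1 z - zbar z) * p.1 + V_scale * (zbar z - rho 2 z) * p.2.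

Let V_formE z p : V_form z p =
  V_scale * p.1 * (rho 1 z - zbar z) + V_scale * p.2 * (zbar z - rho 2 z).
Proof. by rewrite /V_form; ring. Qed.

Lemma V_form_le_V_w z p : M_w w p -> ((V_form z p)%:E <= V_w w z)%E.
Proof.
move=> Mp; rewrite V_formE; apply: ereal_sup_ubound.
by exists (V_scale * p.1), (V_scale * p.2); split=> //; exists p.
Qed.

Lemma V_w_leP z v : (V_w w z <= v%:E)%E <-> forall p, M_w w p -> V_form z p <= v.
Proof.
split=> [Vv p Mp | Vv]; first by rewrite -lee_fin (le_trans (V_form_le_V_w z p Mp)).
apply: ge_ereal_sup => _ [l [u [[p Mp [-> ->]] ->]]].
by rewrite lee_fin -V_formE Vv.
Qed.

Lemma V_w_ub : (exists B, forall p, M_w w p -> p.2 <= B) ->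
  forall z, exists r : R, (V_w w z <= r%:E)%E.
Proof.
move=> [B MB] z.
pose a := V_scale * (rho 1 z - zbar z); pose b := V_scale * (zbar z - rho 2 z).
exists (`|a| * B + `|b| * B); apply/V_w_leP => p Mp.
have [p1_ge0 [p12 _]] := Mp.
rewrite /V_form -/a -/b lerD // ler_mulr_norm //.
  by rewrite p1_ge0 (le_trans p12) ?MB.
by rewrite (le_trans p1_ge0 p12) MB.
Qed.

Hypothesis w01 : forall i, 0 <= w i <= 1.

Lemma M_w_le p q : M_w w p -> 0 <= q.1 <= q.2 -> q.1 <= p.1 -> q.2 <= p.2 ->
  M_w w q.
Proof.
move=> [_ [_ Mp]] /andP[q1_ge0 q12] qp1 qp2; split=> //; split=> // i j ij.
apply: le_trans (Mp i j ij); have /andP[wj0 _] := w01 j; have /andP[_ wi1] := w01 i.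
by rewrite lerD // ler_wpM2l // subr_ge0.
Qed.

(* M_w is closed downwards, so the supremum defining V_w may be taken over
   grid points only; this makes its level sets measurable. *)
Definition grid_point (n k1 k2 : nat) : R * R := (k1%:R / n.+1%:R, k2%:R / n.+1%:R).

Lemma V_w_le_gridP z v : (V_w w z <= v%:E)%E <->
  forall n k1 k2, M_w w (grid_point n k1 k2) -> V_form z (grid_point n k1 k2) <= v.
Proof.
rewrite V_w_leP; split=> [Vv n k1 k2 /Vv // | Vv p Mp].
have [p1_ge0 [p12 _]] := Mp; have p2_ge0 := le_trans p1_ge0 p12.
pose a := V_scale * (rho 1 z - zbar z); pose b := V_scale * (zbar z - rho 2 z).
apply: (@ler_addr_divSn _ _ _ (`|a| + `|b|)) => n.
pose q := (floor_grid n p.1, floor_grid n p.2).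
have Mq : M_w w q.
  apply: (M_w_le _ _ Mp) => /=; rewrite ?floor_grid_le //.
  by rewrite floor_grid_ge0 floor_grid_homo.
have -> : V_form z p = V_form z q + (a * (p.1 - q.1) + b * (p.2 - q.2)).
  by rewrite /V_form -/a -/b; ring.
rewrite mulrDl lerD //; first exact: (Vv n _ _ Mq).
by rewrite lerD // ler_mulr_norm // subr_ge0 floor_grid_le //= ltW // floor_grid_gap.
Qed.

End V_w.

Section measurable_V_w.
Context {d : measure_display} {T : measurableType d} {R : realType} {m : nat}.
Context {Z : 'I_m -> T -> R} {w : 'I_m -> R}.
Hypotheses (mZ : forall i, measurable_fun setT (Z i)) (m1 : (1 < m)%N).

Lemma measurable_V_form p : measurable_fun setT (fun t => V_form w (Z ^~ t) p).
Proof.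
have mrho1 := measurable_rho1 mZ (ltnW m1); have mrho2 := measurable_rho2 mZ m1.
have mzbar := measurable_zbar mZ.
apply: measurable_realfun.measurable_funD;
  do 2!apply: measurable_realfun.measurable_funM => //;
  exact: measurable_realfun.measurable_funB.
Qed.

Hypothesis w01 : forall i, 0 <= w i <= 1.

Lemma measurable_V_w_le v : measurable [set t | (V_w w (Z ^~ t) <= v%:E)%E].
Proof.
rewrite (_ : [set t | _] = \bigcap_n \bigcap_k1
    \bigcap_(k2 in [set k2 | M_w w (grid_point n k1 k2)])
      [set t | V_form w (Z ^~ t) (grid_point n k1 k2) <= v]); last first.
  apply/seteqP; split=> t /=.
    by move/(V_w_le_gridP w w01) => Vv n _ k1 _ k2; exact: Vv.
  by move=> Vv; apply/(V_w_le_gridP w w01) => n k1 k2; exact: Vv.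
apply: bigcapT_measurable => n; apply: bigcapT_measurable => k1.
apply: bigcap_measurableType => k2 _; rewrite -[X in measurable X]setTI.
exact: measurable_fun_le (measurable_V_form _) (measurable_cst v).
Qed.

End measurable_V_w.

Section positional_rule.
Context {R : realType} {m : nat} {w : 'I_m -> R}.
Hypothesis wrule : positional_rule w.

Lemma positional_rule_01 i : 0 <= w i <= 1.
Proof.
have [w_first [w_last w_homo]] := wrule.
have m0 : (0 < m)%N := leq_ltn_trans (leq0n _) (ltn_ord i).
have last_lt : (m.-1 < m)%N by rewrite ltn_predL.
rewrite -(w_first (Ordinal m0)) // -(w_last (Ordinal last_lt)) //.
by rewrite !w_homo //= -ltnS prednK.
Qed.

Lemma M_w_bounded : (exists i, w i != @antiplurality R m i) ->
  exists B, forall p, M_w w p -> p.2 <= B.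
Proof.
have [_ [w_last _]] := wrule; case=> i wi.
have i_last : val i != m.-1.
  by apply: contra wi => /eqP i_last; rewrite w_last // /antiplurality i_last eqxx.
have wi1 : 0 < 1 - w i.
  rewrite subr_gt0 lt_neqAle; have /andP[_ ->] := positional_rule_01 i.
  by move: wi; rewrite /antiplurality (negbTE i_last) andbT.
have ij : ((val i).+1 < m)%N.
  by move: i_last (ltn_ord i); rewrite [val i]/=; lia.
exists (1 - w i)^-1 => p [p1_ge0 [_ Mp]]; rewrite -(ler_pM2l wi1) mulfV ?gt_eqF //.
apply: le_trans (Mp i (Ordinal ij) erefl).
by rewrite lerDr mulr_ge0 //; case/andP: (positional_rule_01 (Ordinal ij)).
Qed.

End positional_rule.

Section antiplurality.
Context {R : realType}.

Lemma antiplurality_01 m (i : 'I_m) : 0 <= @antiplurality R m i <= 1.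
Proof. by rewrite /antiplurality; case: ifP; rewrite ?lexx ?ler01. Qed.

Lemma M_w_antiplurality m u : 0 <= u -> M_w (@antiplurality R m) (0, u).
Proof.
move=> u0; split=> //=; split=> // i j ij.
suff -> : @antiplurality R m i = 1 by rewrite subrr mulr0 mul0r addr0 ler01.
rewrite /antiplurality ifF //; apply/negbTE.
change (nat_of_ord i != m.-1); move: (ltn_ord j); rewrite [nat_of_ord j]ij; lia.
Qed.

Lemma sum_antiplurality n : \sum_(i < n.+1) @antiplurality R n.+1 i = n%:R.
Proof.
rewrite big_ord_recr /= /antiplurality eqxx addr0 -[n in RHS]card_ord -sumr_const.
by apply: eq_bigr => i _; rewrite ifF //= (ltn_eqF (ltn_ord i)).
Qed.

Lemma sum_antiplurality_sqr n : \sum_(i < n.+1) @antiplurality R n.+1 i ^+ 2 = n%:R.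
Proof.
rewrite -sum_antiplurality; apply: eq_bigr => i _.
by rewrite /antiplurality; case: ifP; rewrite ?expr0n ?expr1n.
Qed.

Lemma V_scale_antiplurality_gt0 {m} : (1 < m)%N -> 0 < V_scale (@antiplurality R m).
Proof.
case: m => [|n] // n0; rewrite /V_scale /sigma_w /mean_w.
rewrite sum_antiplurality sum_antiplurality_sqr -[n.+1]addn1 natrD.
have n0' : 0 < (n%:R : R) by rewrite ltr0n.
set x := n%:R / (n%:R + 1).
have [x0 x1] : 0 < x /\ x < 1.
  by split; [rewrite divr_gt0 //; lra | rewrite ltr_pdivrMr; lra].
apply: mulr_gt0; rewrite sqrtr_gt0.
  by rewrite expr2 -{1}[x]mulr1 -mulrBr mulr_gt0 ?subr_gt0.
by rewrite addrK divr_gt0 //; lra.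
Qed.

Lemma V_w_antiplurality {m} (z : 'I_m -> R) : (1 < m)%N -> rho 2 z < zbar z ->
  V_w (@antiplurality R m) z = +oo%E.
Proof.
move=> m1 z_gap; apply: eq_infty => r.
have c0 := V_scale_antiplurality_gt0 m1.
set c := V_scale _ in c0; set b := zbar z - rho 2 z.
have b0 : 0 < b by rewrite subr_gt0.
have u0 : 0 <= `|r| / (c * b) by rewrite divr_ge0 // ltW // mulr_gt0.
apply: le_trans (V_form_le_V_w _ z _ (M_w_antiplurality m _ u0)).
rewrite lee_fin /V_form /= -/c -/b mulr0 add0r mulrC divfK ?ler_norm //.
by rewrite mulf_neq0 ?gt_eqF.
Qed.

End antiplurality.

Lemma rho2_lt_zbar {R : realType} {m : nat} (z : 'I_m -> R) (i0 : 'I_m) :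
  (1 < m)%N -> (forall i, i != i0 -> -1 <= z i <= 1) -> 2 * m%:R <= z i0 ->
  rho 2 z < zbar z.
Proof.
move=> m1 z_small z_big.
have rho2_le1 : rho 2 z <= 1.
  have [i [j [ij /le_trans rho2_le]]] := rho2_le_min z m1.
  have [k [k_ne zk]] : exists k, k != i0 /\ Num.min (z i) (z j) <= z k.
    have [i0i | i_ne] := eqVneq i0 i; last by exists i; rewrite eq_sym ge_min lexx.
    by exists j; rewrite i0i eq_sym ij ge_min lexx orbT.
  by case/andP: (z_small k k_ne) => _; exact: le_trans (rho2_le _ zk).
have : z i0 + 1 <= \sum_i (z i + 1).
  rewrite (bigD1 i0) //= lerDl sumr_ge0 // => i /z_small /andP[z_ge _].
  by rewrite -lerBlDr sub0r.
rewrite big_split /= sumr_const card_ord /zbar => sum_ge.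
apply: (le_lt_trans rho2_le1); rewrite ltr_pdivlMr ?ltr0n ?(ltnW m1) //; lra.
Qed.

Lemma normal_prob_itv_gt0 {R : realType} (a b : R) : a < b ->
  (0 < normal_prob 0 1 [set` `[a, b]])%E.
Proof.
move=> ab; set M := `|a| + `|b|.
pose k := normal_peak (1 : R) * expR (- M ^+ 2 / 2).
have k0 : 0 < k by rewrite mulr_gt0 ?expR_gt0 ?normal_peak_gt0 ?oner_neq0.
have pdf_ge x : x \in `[a, b] -> k <= normal_pdf 0 1 x.
  rewrite in_itv /= => /andP[ax xb].
  rewrite normal_pdfE ?oner_neq0 // ler_wpM2l ?normal_peak_ge0 //.
  rewrite /normal_fun ler_expR subr0 expr1n !mulNr lerN2 ler_pM2r ?invr_gt0 //.
  have a0 := normr_ge0 a; have b0 := normr_ge0 b.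
  have Mx : - M <= x by have := ler_norm (- a); rewrite normrN /M; lra.
  have xM : x <= M by have := ler_norm b; rewrite /M; lra.
  nra.
apply: (@lt_le_trans _ _ (\int[lebesgue_measure]_(x in [set` `[a, b]]) k%:E))%E.
  rewrite integral_cst /=; last exact: measurable_itv.
  by rewrite lebesgue_measure_itv /= lte_fin ab -EFinD mule_gt0 // lte_fin subr_gt0.
apply: ge0_le_integral.
- exact: measurable_itv.
- by move=> x _; rewrite lee_fin ltW.
- exact: measurable_cst.
- apply/measurable_realfun.measurable_EFinP; apply: measurable_funTS.
  exact: measurable_normal_pdf.
- by move=> x /= /pdf_ge; rewrite lee_fin.
Qed.

Lemma probability_cover_gt {d} {T : measurableType d} {R : realType}
    (P : probability T R) (F : nat -> set T) (c : \bar R) :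
  (forall n, measurable (F n)) -> {homo F : n k / (n <= k)%N >-> (n <= k)%O} ->
  \bigcup_n F n = setT -> (c < 1)%E -> exists n, (c < P (F n))%E.
Proof.
move=> mF F_homo F_cover c_lt1; apply: contrapT => c_ge.
have mFT : measurable (\bigcup_n F n) by rewrite F_cover.
have PF_cvg := nondecreasing_cvg_mu (mu := P) mF mFT F_homo.
rewrite F_cover in PF_cvg.
suff : (P setT <= c)%E by rewrite probability_setT leNgt c_lt1.
rewrite -(cvg_lim _ PF_cvg) //; apply: lime_le; first by apply/cvg_ex; exists (P setT).
by apply: nearW => n; rewrite leNgt; apply/negP => c_lt; apply: c_ge; exists n.
Qed.

Section g_w.
Context {d : measure_display} {T : measurableType d} {R : realType}.
Context {P : probability T R} {m : nat}.

Lemma exists_g_w_gt (Z : 'I_m -> {RV P >-> R}) {w : 'I_m -> R} :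
  (1 < m)%N -> positional_rule w -> (exists i, w i != @antiplurality R m i) ->
  forall c, (c < 1)%E -> exists n : nat, (c < g_w Z w n%:R)%E.
Proof.
move=> m1 wrule w_neq c c_lt1.
have mZ i : measurable_fun setT (Z i) := measurable_funPT (Z i).
apply: (probability_cover_gt P (fun n => [set t | V_w w (Z ^~ t) <= n%:R%:E]%E)) => //.
- by move=> n; exact: measurable_V_w_le mZ m1 (positional_rule_01 wrule) _.
- move=> k n kn; apply/subsetPset => t /= /le_trans; apply.
  by rewrite lee_fin ler_nat.
apply/seteqP; split=> // t _.
have [r Vr] := V_w_ub w (M_w_bounded wrule w_neq) (Z ^~ t).
exists (Num.truncn r).+1 => //; apply: le_trans Vr _.
by rewrite lee_fin ltW // truncnS_gt.
Qed.

End g_w.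

Section iid_std_normal.
Context {d : measure_display} {T : measurableType d} {R : realType}.
Context {P : probability T R} {m : nat} {Z : 'I_m -> {RV P >-> R}}.
Hypothesis Ziid : iid_std_normal Z.

Lemma iid_std_normal_box_gt0 (a b : 'I_m -> R) : (forall i, a i < b i) ->
  (0 < P (\bigcap_(i in [set: 'I_m]) (Z i @^-1` [set` `[a i, b i]])))%E.
Proof.
move=> ab; have [Zlaw Zindep] := Ziid.
rewrite Zindep => [|i]; last exact: measurable_itv.
apply: (big_ind (fun x => 0 < x)%E) => // [x y|i _]; first exact: mule_gt0.
by rewrite Zlaw ?normal_prob_itv_gt0 //; exact: measurable_itv.
Qed.

Lemma g_w_antiplurality_lt1 : (1 < m)%N ->
  exists2 c, (c < 1)%E & forall v, (g_w Z (@antiplurality R m) v <= c)%E.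
Proof.
move=> m1; have mZ i : measurable_fun setT (Z i) := measurable_funPT (Z i).
pose i0 : 'I_m := Ordinal (ltnW m1).
pose a i : R := if i == i0 then 2 * m%:R else -1.
pose b i : R := if i == i0 then 2 * m%:R + 1 else 1.
pose G := \bigcap_(i in [set: 'I_m]) (Z i @^-1` [set` `[a i, b i]]).
have mG : measurable G.
  apply: fin_bigcap_measurable => [|i _]; first exact: finite_finset.
  by rewrite -[X in measurable X]setTI; exact: mZ measurableT _ (measurable_itv _).
exists (P (~` G)).
  rewrite probability_setC // gte_subl // iid_std_normal_box_gt0 // => i.
  by rewrite /a /b; case: ifP => _; lra.
move=> v; apply: le_measure; rewrite ?inE.
- exact: measurable_V_w_le mZ m1 (@antiplurality_01 R m) _.
- exact: measurableC.
move=> t /= + Gt; rewrite (V_w_antiplurality _ m1) ?(rho2_lt_zbar _ i0 m1) //.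
  by move=> i /negbTE i_ne; have := Gt i I; rewrite /= /a /b i_ne in_itv.
by have := Gt i0 I; rewrite /= /a /b eqxx in_itv /= => /andP[].
Qed.

End iid_std_normal.

Theorem proposition13 (R : realType) (d : measure_display) (T : measurableType d)
    (P : probability T R) (m : nat) (Z : 'I_m -> {RV P >-> R}) :
  (3 <= m)%N ->
  iid_std_normal Z ->
  forall w : 'I_m -> R, positional_rule w ->
    (exists i : 'I_m, w i != @antiplurality R m i) ->
    ~ dominates Z w (@antiplurality R m).
Proof.
move=> m3 Ziid w wrule w_neq w_dom; have m1 : (1 < m)%N := ltnW m3.
have [c c_lt1 g_AP_le] := g_w_antiplurality_lt1 Ziid m1.
have [n c_lt] := exists_g_w_gt Z m1 wrule w_neq _ c_lt1.
have := w_dom n%:R (ler0n _ n); rewrite leNgt => /negP; apply.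
exact: le_lt_trans (g_AP_le _) c_lt.
Qed.
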